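(* Let $0<\alpha'<2/9$, $0<\beta'<1/4$, $\tfrac98\alpha'\neq\beta'$. Then the separability $\mathcal{S}=\tfrac12\big(\|z_1-z_5\|_2^2+\|z_2-z_5\|_2^2\big)$ between ID nodes and the semantic OOD node equals $$\mathcal{S}=\begin{cases}(7+12\beta'+12\alpha')\Big(\frac{1-2\beta'}{3}\big(1-\beta'-\tfrac34\alpha'\big)^2+1\Big), & \tfrac98\alpha'>\beta',\\[4pt](7+12\beta'+12\alpha')\Big(\frac{2-3\alpha'}{8}\big(1-\beta'-\tfrac34\alpha'\big)^2+1\Big), & \tfrac98\alpha'<\beta'.\end{cases}$$
   Context: Toy five-node model. Nodes, in order: 1 = angel in sketch (ID, class angel), 2 = tiger in sketch (ID, class tiger), 3 = angel in painting (covariate OOD, class angel), 4 = tiger in painting (covariate OOD, class tiger), 5 = panda (semantic OOD). The model is the first-order approximation (in $\alpha'=\alpha/\rho$, $\beta'=\beta/\rho$, with $\eta_u=5,\eta_l=1$) of the augmentation graph, given concretely by $M=\begin{pmatrix}1-2\beta'-\frac32\alpha'&2\beta'&\frac{3}{\sqrt2}\alpha'&0&0\\2\beta'&1-2\beta'-\frac32\alpha'&0&\frac3{\sqrt2}\alpha'&0\\\frac3{\sqrt2}\alpha'&0&1-2\beta'-3\alpha'&2\beta'&0\\0&\frac3{\sqrt2}\alpha'&2\beta'&1-2\beta'-3\alpha'&0\\0&0&0&0&1\end{pmatrix}$, $C=7+12\beta'+12\alpha'$, and $\Delta=\sqrt{C}\,\mathrm{diag}\big(\tfrac{1}{\sqrt2}(1-\beta'-\tfrac34\alpha'),\tfrac1{\sqrt2}(1-\beta'-\tfrac34\alpha'),1-\beta'-\tfrac32\alpha',1-\beta'-\tfrac32\alpha',1\big)$.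 Embeddings: let $V\in\mathbb{R}^{5\times3}$ have orthonormal columns spanning eigenvectors of $M$ for its three largest eigenvalues (with multiplicity), $\Sigma$ the diagonal matrix of those eigenvalues, and $Z=\Delta V\Sigma^{1/2}$ with $i$-th row $z_i^\top$ the embedding of node $i$. (Distances between rows do not depend on the choice of orthonormal basis within eigenspaces.) *)

From HB Require Import structures.
From mathcomp Require Import all_boot all_order all_algebra.
Set Implicit Arguments. Unset Strict Implicit. Unset Printing Implicit Defensive.
Import Order.TTheory GRing.Theory Num.Theory.
Local Open Scope ring_scope.

Section Toy.
Variable R : rcfType.

(* Nodes 1..5 of the paper are indices 0..4 here.  a = alpha', b = beta'. *)
Definition Mentry (a b : R) (i j : nat) : R :=
  let s := 3 / Num.sqrt 2 * a in
  match i, j with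
  | 0, 0 | 1, 1 => 1 - 2 * b - 3 / 2 * a
  | 2, 2 | 3, 3 => 1 - 2 * b - 3 * a
  | 0, 1 | 1, 0 | 2, 3 | 3, 2 => 2 * b
  | 0, 2 | 2, 0 | 1, 3 | 3, 1 => s
  | 4, 4 => 1
  | _, _ => 0
  end.

Definition Mtoy (a b : R) : 'M[R]_5 := \matrix_(i < 5, j < 5) Mentry a b i j.

Definition Ctoy (a b : R) : R := 7 + 12 * b + 12 * a.

Definition Dentry (a b : R) (i : nat) : R :=
  match i with
  | 0 | 1 => (1 - b - 3 / 4 * a) / Num.sqrt 2
  | 2 | 3 => 1 - b - 3 / 2 * a
  | _ => 1
  end.

Definition Delta (a b : R) : 'M[R]_5 :=
  Num.sqrt (Ctoy a b) *: diag_mx (\row_(i < 5) Dentry a b i).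

Lemma le35 : (3 <= 5)%N. Proof. by []. Qed.

(* V (5x3, orthonormal columns) spans eigenvectors of M for its three largest
   eigenvalues (with multiplicity), lam being those eigenvalues (diagonal of
   Sigma): V consists of the first three columns of an orthogonal
   eigenbasis U of M whose eigenvalues d are sorted in nonincreasing order. *)
Definition top3_eig (M : 'M[R]_5) (V : 'M[R]_(5, 3)) (lam : 'rV[R]_3) : Prop :=
  exists (U : 'M[R]_5) (d : 'rV[R]_5),
    [/\ U^T *m U = 1%:M,
        M = U *m diag_mx d *m U^T,
        (forall i j : 'I_5, (i <= j)%N -> d 0 j <= d 0 i),
        V = \matrix_(i < 5, k < 3) U i (widen_ord le35 k) &
        lam = \row_(k < 3) d 0 (widen_ord le35 k)].

(* Z = Delta V Sigma^{1/2}; row i is the embedding z_i. *)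
Definition Zemb (a b : R) (V : 'M[R]_(5, 3)) (lam : 'rV[R]_3) : 'M[R]_(5, 3) :=
  Delta a b *m V *m diag_mx (map_mx Num.sqrt lam).

Definition sqdist (Z : 'M[R]_(5, 3)) (i j : 'I_5) : R :=
  \sum_(k < 3) (Z i k - Z j k) ^+ 2.

Definition separability (a b : R) (V : 'M[R]_(5, 3)) (lam : 'rV[R]_3) : R :=
  let Z := Zemb a b V lam in
  (sqdist Z 0 4 + sqdist Z 1 4) / 2.

End Toy.

From mathcomp Require Import all_boot all_order all_algebra.
From mathcomp Require Import ring lra.
Import Order.TTheory GRing.Theory Num.Theory.
Set Implicit Arguments.
Unset Strict Implicit.
Unset Printing Implicit Defensive.
Local Open Scope ring_scope.

(* Besides node 5 (eigenvalue 1), M splits into two 2x2 blocks acting on the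
   vectors that are symmetric resp. antisymmetric under the swap 1 <-> 2,
   3 <-> 4; their eigenvalues are 1, 1 - 9a/2 and 1 - 4b, 1 - 4b - 9a/2.  Under
   the hypotheses the third largest eigenvalue t (1 - 4b or 1 - 9a/2) lies
   strictly above the two smallest ones, so V Sigma V^T, the spectral part of
   M on its top three eigenvalues, does not depend on the chosen eigenbasis:
   two orthogonal diagonalisations U diag(d) U^T = W diag(e) W^T satisfy
   U diag(f o d) U^T = W diag(f o e) W^T for every f, and the trace of this
   identity for the indicator of [t, +oo) shows that exactly three of the
   sorted d_j lie above t.  Since ||z_i - z_j||^2 only depends on the Gram
   matrix Z Z^T = Delta (V Sigma V^T) Delta, the separability can then be
   read off an explicit eigenbasis. *)

Lemma nonincreasing_bool_prefix (b : nat -> bool) (n k : nat) :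
  (forall i j, (i <= j < n)%N -> b j -> b i) ->
  (\sum_(i < n) b i)%N = k -> forall j, (j < n)%N -> b j = (j < k)%N.
Proof.
move=> b_mono <- j lt_jn.
rewrite -(big_mkord xpredT (fun i => nat_of_bool (b i))).
have sum_split m : (m <= n)%N ->
    (\sum_(0 <= i < n) b i = \sum_(0 <= i < m) b i + \sum_(m <= i < n) b i)%N.
  by move=> le_mn; rewrite -big_cat_nat.
case bj: (b j); apply/esym.
  have head1 : (\sum_(0 <= i < j.+1) b i = j.+1)%N.
    rewrite -[RHS]muln1 -[j.+1]subn0 -sum_nat_const_nat.
    apply: eq_big_nat => i /andP[_]; rewrite subn0 => le_ij.
    by rewrite (b_mono i j) // -ltnS le_ij.
  by rewrite (sum_split j.+1) // head1 leq_addr.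
have tail0 : (\sum_(j <= i < n) b i = 0)%N.
  rewrite big_nat_cond big1 // => i /andP[/andP[le_ji lt_in] _].
  case bi: (b i) => //; suff : b j by rewrite bj.
  by apply: (b_mono j i); rewrite ?le_ji ?lt_in ?bi.
apply/negbTE; rewrite -leqNgt (sum_split j (ltnW lt_jn)) tail0 addn0.
apply: (@leq_trans (\sum_(0 <= i < j) 1)%N).
  exact: leq_sum (fun i _ => leq_b1 (b i)).
by rewrite sum_nat_const_nat subn0 muln1.
Qed.

Lemma diag_mx_commute_map (R : idomainType) n (e d : 'rV[R]_n) (Q : 'M[R]_n)
    (f : R -> R) :
  diag_mx e *m Q = Q *m diag_mx d ->
  diag_mx (map_mx f e) *m Q = Q *m diag_mx (map_mx f d).
Proof.
move=> eQ; apply/matrixP => i j; have := congr1 (fun M : 'M_n => M i j) eQ.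
rewrite !mul_diag_mx !mul_mx_diag !mxE => eQij.
have [-> | nzQ] := eqVneq (Q i j) 0; first by rewrite mulr0 mul0r.
have -> : e 0 i = d 0 j by apply: (mulIf nzQ); rewrite eQij mulrC.
by rewrite mulrC.
Qed.

Lemma orthogonal_conj_map (R : idomainType) n (U W : 'M[R]_n)
    (d e : 'rV[R]_n) (f : R -> R) :
  U^T *m U = 1%:M -> W^T *m W = 1%:M ->
  W *m diag_mx e *m W^T = U *m diag_mx d *m U^T ->
  W *m diag_mx (map_mx f e) *m W^T = U *m diag_mx (map_mx f d) *m U^T.
Proof.
move=> UtU WtW eq_conj.
have UUt := mulmx1C UtU; have WWt := mulmx1C WtW.
set Q := W^T *m U.
have U_WQ : U = W *m Q by rewrite mulmxA WWt mul1mx.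
have QQt : Q *m Q^T = 1%:M.
  by rewrite trmx_mul trmxK !mulmxA -[W^T *m U *m U^T]mulmxA UUt mulmx1.
have eQ : diag_mx e *m Q = Q *m diag_mx d.
  transitivity (W^T *m (W *m diag_mx e *m W^T) *m U).
    by rewrite !mulmxA WtW mul1mx.
  by rewrite eq_conj !mulmxA -[Q *m diag_mx d *m U^T *m U]mulmxA UtU mulmx1.
clearbody Q; rewrite U_WQ -(mulmxA W Q) -(diag_mx_commute_map f eQ).
by rewrite trmx_mul !mulmxA -[W *m _ *m Q *m Q^T]mulmxA QQt mulmx1.
Qed.

Lemma mxtrace_orthogonal_conj (R : comPzRingType) n (U : 'M[R]_n)
    (x : 'rV[R]_n) :
  U^T *m U = 1%:M -> \tr (U *m diag_mx x *m U^T) = \sum_i x 0 i.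
Proof. by move=> UtU; rewrite mxtrace_mulC mulmxA UtU mul1mx mxtrace_diag. Qed.

Definition trunc_row (R : zmodType) m n (x : 'rV[R]_n) : 'rV[R]_n :=
  \row_j if (j < m)%N then x 0 j else 0.

Lemma truncated_conj (R : pzRingType) m n (le_mn : (m <= n)%N)
    (U : 'M[R]_n) (d : 'rV[R]_n) :
  let V := \matrix_(i < n, k < m) U i (widen_ord le_mn k) in
  V *m diag_mx (\row_(k < m) d 0 (widen_ord le_mn k)) *m V^T
  = U *m diag_mx (trunc_row m d) *m U^T.
Proof.
apply/matrixP => i j; rewrite !mul_mx_diag !mxE.
under eq_bigr do rewrite !mxE; under [RHS]eq_bigr do rewrite !mxE.
rewrite [RHS](bigID (fun k : 'I_n => (k < m)%N)) /= [X in _ + X]big1 => [|k].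
  rewrite addr0 (eq_bigr (fun k => U i k * d 0 k * U j k)) => [|k ->] //.
  by rewrite big_ord_narrow.
by move/negbTE ->; rewrite mulr0 mul0r.
Qed.

Lemma orthogonal_conj_count (R : numDomainType) n (U W : 'M[R]_n)
    (d e : 'rV[R]_n) (t : R) :
  U^T *m U = 1%:M -> W^T *m W = 1%:M ->
  W *m diag_mx e *m W^T = U *m diag_mx d *m U^T ->
  (\sum_j ((t <= e 0 j)%R : nat) = \sum_j ((t <= d 0 j)%R : nat))%N.
Proof.
move=> UtU WtW eq_conj; apply/eqP; rewrite -(eqr_nat R) !natr_sum; apply/eqP.
pose f y := ((t <= y)%R)%:R : R.
have sum_map (x : 'rV[R]_n) : \sum_i (map_mx f x) 0 i = \sum_i f (x 0 i).
  by apply: eq_bigr => i _; rewrite mxE.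
have := congr1 mxtrace (orthogonal_conj_map f UtU WtW eq_conj).
by rewrite !mxtrace_orthogonal_conj // !sum_map.
Qed.

Lemma sorted_threshold_transfer (R : numDomainType) n m (U W : 'M[R]_n.+1)
    (d e : 'rV[R]_n.+1) (t : R) :
  (m <= n.+1)%N -> U^T *m U = 1%:M -> W^T *m W = 1%:M ->
  W *m diag_mx e *m W^T = U *m diag_mx d *m U^T ->
  (forall i j : 'I_n.+1, (i <= j)%N -> d 0 j <= d 0 i) ->
  (forall j : 'I_n.+1, (t <= e 0 j) = (j < m)%N) ->
  forall j : 'I_n.+1, (t <= d 0 j) = (j < m)%N.
Proof.
move=> le_mn UtU WtW eq_conj d_sorted e_thr j.
have count_e : (\sum_(j < n.+1) ((t <= e 0 j)%R : nat))%N = m.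
  under eq_bigr do rewrite e_thr.
  by rewrite -big_mkcond (big_ord_narrow le_mn) big_const_ord iter_addn_0 mul1n.
rewrite (orthogonal_conj_count t UtU WtW eq_conj) in count_e.
have d_mono i k : (i <= k < n.+1)%N ->
    t <= d 0 (inord k) -> t <= d 0 (inord i).
  move=> /andP[le_ik lt_kn] le_tk; apply: le_trans le_tk _.
  by apply: d_sorted; rewrite !inordK // (leq_ltn_trans le_ik lt_kn).
have count_d : (\sum_(i < n.+1) ((t <= d 0 (inord i))%R : nat))%N = m.
  by rewrite -count_e; apply: eq_bigr => i _; rewrite inord_val.
by rewrite -(nonincreasing_bool_prefix d_mono count_d (ltn_ord j)) inord_val.
Qed.

Lemma threshold_trunc_row (R : numDomainType) n m (x : 'rV[R]_n) (t : R) :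
  (forall j : 'I_n, (t <= x 0 j) = (j < m)%N) ->
  map_mx (fun y => if t <= y then y else 0) x = trunc_row m x.
Proof. by move=> x_thr; apply/matrixP => i j; rewrite ord1 !mxE x_thr. Qed.

Lemma top_spectral_part_unique (R : numDomainType) n m (U W : 'M[R]_n.+1)
    (d e : 'rV[R]_n.+1) (t : R) :
  (m <= n.+1)%N -> U^T *m U = 1%:M -> W^T *m W = 1%:M ->
  W *m diag_mx e *m W^T = U *m diag_mx d *m U^T ->
  (forall i j : 'I_n.+1, (i <= j)%N -> d 0 j <= d 0 i) ->
  (forall j : 'I_n.+1, (t <= e 0 j) = (j < m)%N) ->
  W *m diag_mx (trunc_row m e) *m W^T = U *m diag_mx (trunc_row m d) *m U^T.
Proof.
move=> le_mn UtU WtW eq_conj d_sorted e_thr.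
have d_thr := sorted_threshold_transfer le_mn UtU WtW eq_conj d_sorted e_thr.
rewrite -(threshold_trunc_row e_thr) -(threshold_trunc_row d_thr).
exact: orthogonal_conj_map.
Qed.

Lemma sum_sqr_diag_scaled (R : comPzRingType) m n (x : 'rV[R]_m)
    (A : 'M[R]_(m, n)) (s : 'rV[R]_n) (i j : 'I_m) :
  let Z := diag_mx x *m A *m diag_mx s in
  let P := A *m diag_mx (map_mx (fun y => y ^+ 2) s) *m A^T in
  \sum_(k < n) (Z i k - Z j k) ^+ 2
  = x 0 i ^+ 2 * P i i - x 0 i * x 0 j * P i j *+ 2 + x 0 j ^+ 2 * P j j.
Proof.
rewrite /= !mul_mx_diag !mul_diag_mx !mxE.
under eq_bigr do rewrite !mxE.
rewrite !mulr_sumr -sumrMnl -sumrB -big_split /=; apply: eq_bigr => k _.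
by rewrite !mxE; ring.
Qed.

Section ToyEigenbasis.
Variables (R : rcfType) (a b : R).

Local Notation s2 := (Num.sqrt (2 : R)).
Local Notation s3 := (Num.sqrt (3 : R)).

(* Entry i of eigenvector j: e_5, then the eigenvectors that are symmetric
   (j = 1, 3) resp. antisymmetric (j = 2, 4) under 1 <-> 2, 3 <-> 4. *)
Definition toy_eigvec (j i : nat) : R :=
  match j, i with
  | 0, 4 => 1
  | 1, (0 | 1) | 2, 0 => 1 / s3
  | 1, (2 | 3) | 2, 2 | 3, (0 | 1) | 4, 0 => 1 / (s3 * s2)
  | 2, 1 | 3, (2 | 3) | 4, 2 => - (1 / s3)
  | 2, 3 | 4, 1 => - (1 / (s3 * s2))
  | 4, 3 => 1 / s3
  | _, _ => 0
  end.

Definition toy_eigval (j : nat) : R :=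
  match j with
  | 0 | 1 => 1
  | 2 => 1 - 4 * b
  | 3 => 1 - 9 / 2 * a
  | _ => 1 - 4 * b - 9 / 2 * a
  end.

(* Which of 1 - 4b and 1 - 9a/2 is larger depends on the sign of 9a/8 - b;
   [sw] swaps them so that the eigenvalues come sorted. *)
Definition toy_order (sw : bool) (j : nat) : nat :=
  if sw then match j with 2 => 3 | 3 => 2 | _ => j end else j.

Definition toy_eigbasis sw : 'M[R]_5 :=
  \matrix_(i, j) toy_eigvec (toy_order sw j) i.

Definition toy_eigvals sw : 'rV[R]_5 := \row_j toy_eigval (toy_order sw j).

Lemma sqrt2_sqr : s2 ^+ 2 = 2. Proof. by rewrite sqr_sqrtr // ler0n. Qed.
Lemma sqrt3_sqr : s3 ^+ 2 = 3. Proof. by rewrite sqr_sqrtr // ler0n. Qed.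
Lemma sqrt2_neq0 : s2 != 0. Proof. by rewrite gt_eqF // sqrtr_gt0 ltr0n. Qed.
Lemma sqrt3_neq0 : s3 != 0. Proof. by rewrite gt_eqF // sqrtr_gt0 ltr0n. Qed.

Lemma toy_eigbasis_orthogonal sw : (toy_eigbasis sw)^T *m toy_eigbasis sw = 1%:M.
Proof.
have h2 := sqrt2_sqr; have h3 := sqrt3_sqr.
have n2 := sqrt2_neq0; have n3 := sqrt3_neq0.
apply/matrixP => -[[|[|[|[|[|//]]]]] ?] -[[|[|[|[|[|//]]]]] ?];
  rewrite !mxE !big_ord_recr big_ord0 /= !mxE /=;
  case: sw => /=; field: h2 h3; rewrite ?n2 ?n3 //.
Qed.

Lemma toy_eigendecomposition sw :
  toy_eigbasis sw *m diag_mx (toy_eigvals sw) *m (toy_eigbasis sw)^T = Mtoy a b.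
Proof.
have h2 := sqrt2_sqr; have h3 := sqrt3_sqr.
have n2 := sqrt2_neq0; have n3 := sqrt3_neq0.
rewrite mul_mx_diag.
apply/matrixP => -[[|[|[|[|[|//]]]]] ?] -[[|[|[|[|[|//]]]]] ?];
  rewrite !mxE !big_ord_recr big_ord0 /= !mxE /=;
  case: sw => /=; field: h2 h3; rewrite ?n2 ?n3 //.
Qed.

Lemma toy_top_spectral_part sw :
  let P := toy_eigbasis sw *m diag_mx (trunc_row 3 (toy_eigvals sw))
           *m (toy_eigbasis sw)^T in
  let p := if sw then (2 - 3 * a) / 4 else (2 - 4 * b) / 3 in
  [/\ P 0 0 = p, P 1 1 = p, P 0 4 = 0, P 1 4 = 0 & P 4 4 = 1].
Proof.
have h2 := sqrt2_sqr; have h3 := sqrt3_sqr.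
have n2 := sqrt2_neq0; have n3 := sqrt3_neq0.
rewrite /= mul_mx_diag.
by split; rewrite !mxE !big_ord_recr big_ord0 /= !mxE /=;
  case: sw => /=; field: h2 h3; rewrite ?n2 ?n3.
Qed.

Lemma toy_eigvals_spectrum sw :
  0 < a -> a < 2 / 9 -> 0 < b -> b < 1 / 4 ->
  (if sw then 9 / 8 * a < b else b < 9 / 8 * a) ->
  let E := toy_eigvals sw in
  [/\ forall i j : 'I_5, (i <= j)%N -> E 0 j <= E 0 i,
      forall j : 'I_5, (E 0 2 <= E 0 j) = (j < 3)%N
    & 0 < E 0 2].
Proof.
move=> a_gt0 a_lt b_gt0 b_lt hsw /=; split.
- move=> -[[|[|[|[|[|//]]]]] ?] -[[|[|[|[|[|//]]]]] ?] //= _;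
    rewrite !mxE /=; case: sw hsw => /= hsw; lra.
- move=> j; case: ltnP => j_3; [|apply/negbTE; rewrite -ltNge];
    move: j j_3 => -[[|[|[|[|[|//]]]]] ?] //= _;
    rewrite !mxE /=; case: sw hsw => /= hsw; lra.
- by rewrite mxE; case: sw hsw => /= hsw; lra.
Qed.

End ToyEigenbasis.

Lemma Zemb_diag (R : rcfType) (a b : R) (V : 'M[R]_(5, 3)) (lam : 'rV[R]_3) :
  Zemb a b V lam = diag_mx (\row_(i < 5) (Num.sqrt (Ctoy a b) * Dentry a b i))
                     *m V *m diag_mx (map_mx Num.sqrt lam).
Proof.
rewrite /Zemb /Delta; congr (_ *m _ *m _).
by apply/matrixP => i j; rewrite !mxE mulrnAr.
Qed.

Lemma separability_top_part (R : rcfType) (a b p : R) (V : 'M[R]_(5, 3))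
    (lam : 'rV[R]_3) :
  0 <= Ctoy a b -> (forall k, 0 <= lam 0 k) ->
  let P := V *m diag_mx lam *m V^T in
  P 0 0 = p -> P 1 1 = p -> P 0 4 = 0 -> P 1 4 = 0 -> P 4 4 = 1 ->
  separability a b V lam = Ctoy a b * (p / 2 * (1 - b - 3 / 4 * a) ^+ 2 + 1).
Proof.
move=> C_ge0 lam_ge0 P P00 P11 P04 P14 P44.
have sqr_sqrt_lam : map_mx (fun y => y ^+ 2) (map_mx Num.sqrt lam) = lam.
  by apply/matrixP => i k; rewrite ord1 !mxE sqr_sqrtr.
rewrite /separability Zemb_diag /sqdist !sum_sqr_diag_scaled sqr_sqrt_lam -/P.
rewrite P00 P11 P04 P14 P44 !mxE.
have -> : Dentry a b (0%R : 'I_5) = (1 - b - 3 / 4 * a) / Num.sqrt 2 by [].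
have -> : Dentry a b (1%R : 'I_5) = (1 - b - 3 / 4 * a) / Num.sqrt 2 by [].
have -> : Dentry a b (4%R : 'I_5) = 1 by [].
have hC : Num.sqrt (Ctoy a b) ^+ 2 = Ctoy a b by rewrite sqr_sqrtr.
have h2 := sqrt2_sqr R; have n2 := sqrt2_neq0 R.
by field: hC h2.
Qed.

Theorem theorem3 (R : rcfType) (a b : R) :
  0 < a -> a < 2 / 9 -> 0 < b -> b < 1 / 4 -> 9 / 8 * a != b ->
  (exists (V : 'M[R]_(5, 3)) (lam : 'rV[R]_3), top3_eig (Mtoy a b) V lam) /\
  (forall (V : 'M[R]_(5, 3)) (lam : 'rV[R]_3), top3_eig (Mtoy a b) V lam ->
     (b < 9 / 8 * a ->
        separability a b V lam =
        Ctoy a b * ((1 - 2 * b) / 3 * (1 - b - 3 / 4 * a) ^+ 2 + 1)) /\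
     (9 / 8 * a < b ->
        separability a b V lam =
        Ctoy a b * ((2 - 3 * a) / 8 * (1 - b - 3 / 4 * a) ^+ 2 + 1))).
Proof.
move=> a_gt0 a_lt b_gt0 b_lt ab_neq.
set sw := 9 / 8 * a < b.
have hsw : if sw then 9 / 8 * a < b else b < 9 / 8 * a.
  by rewrite /sw; case: ltgtP ab_neq.
have [E_sorted E_thr E2_gt0] := toy_eigvals_spectrum a_gt0 a_lt b_gt0 b_lt hsw.
have W_orth := toy_eigbasis_orthogonal R sw.
have W_eig := toy_eigendecomposition a b sw.
set W := toy_eigbasis R sw in W_orth W_eig *.
set E := toy_eigvals a b sw in E_sorted E_thr E2_gt0 W_eig *.
split.
  exists (\matrix_(i < 5, k < 3) W i (widen_ord le35 k)).
  exists (\row_(k < 3) E 0 (widen_ord le35 k)).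
  by exists W, E; split; rewrite ?W_eig.
move=> V lam [U [d [UtU M_eq d_sorted -> ->]]].
have eq_conj : W *m diag_mx E *m W^T = U *m diag_mx d *m U^T by rewrite W_eig.
have d_thr := sorted_threshold_transfer le35 UtU W_orth eq_conj d_sorted E_thr.
have [] := toy_top_spectral_part a b sw; rewrite -/W -/E.
rewrite (top_spectral_part_unique le35 UtU W_orth eq_conj d_sorted E_thr).
rewrite -(truncated_conj le35) => P00 P11 P04 P14 P44.
rewrite (separability_top_part _ _ P00 P11 P04 P14 P44); first last.
- by move=> k; rewrite mxE (le_trans (ltW E2_gt0)) // d_thr; exact: (ltn_ord k).
- by rewrite /Ctoy; lra.
by case: (sw) hsw => hsw; split => h //; try (exfalso; lra); field.
Qed.
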